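(* Let $\lambda=(\lambda_1,\ldots,\lambda_k)\in\mathcal P_k$, let $\mu$ be a partition maximal for $\lambda$, and let $P(\lambda)=(P_1,\ldots,P_r)$. If $i\in P_{h+1}$ for some $0\le h<r$, then $\mu_i=\lambda_i+\operatorname{sylv}(\lambda^{(h)})$.
   Context: A partition is a weakly decreasing sequence of nonnegative integers; $\mathcal P_k$ is the set of partitions with at most $k$ nonzero parts, written as sequences $(\lambda_1,\ldots,\lambda_k)$ (trailing zeros allowed), identified with Young diagrams; $|\lambda|=\sum\lambda_i$. For $\lambda\subseteq\mu$ in $\mathcal P_k$, ${\sf Tab}(\mu/\lambda)$ is the set of fillings of $\mu/\lambda$ with entries in $\{1,\ldots,k\}$ strictly increasing along rows (left to right) and columns (top to bottom), with every entry in row $i$ at most $i-1$. $\mu$ is maximal for $\lambda$ if ${\sf Tab}(\mu/\lambda)\ne\emptyset$ and ${\sf Tab}(\nu/\lambda)=\emptyset$ whenever $\nu\in\mathcal P_k$, $\lambda\subseteq\nu$, $|\nu|>|\mu|$. $P(\lambda)=(P_1,\ldots,P_r)$ is the ordered set partition of $\{1,\ldots,k\}$ into blocks of indices with equal parts: $i,j$ lie in the same block iff $\lambda_i=\lambda_j$, and $\lambda_i>\lambda_j$ whenever $i\in P_h$, $j\in P_l$ with $h<l$. Set $\lambda^{(0)}=\emptyset$, $\lambda^{(r)}=\lambda$, and for $1\le h\le r-1$, $\lambda^{(h)}=(\lambda_1-\lambda_i,\lambda_2-\lambda_i,\ldots,\lambda_{i-1}-\lambda_i)$ where $i=\min P_{h+1}$.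 For $n\ge1$ let $\delta^n=(n,n-1,\ldots,1)$ be the staircase, and for a partition $\nu$ let $\operatorname{sylv}(\nu)=\max\{m\ge 0:\delta^m\subseteq\nu\}$ (with $\delta^0=\emptyset$). *)

From mathcomp Require Import all_boot.
Set Implicit Arguments. Unset Strict Implicit. Unset Printing Implicit Defensive.

(* Conventions: a partition lambda in P_k is a seq nat of size k, weakly
   decreasing (trailing zeros allowed). Indices are 0-based: the paper's
   lambda_i is [nth 0 lam (i-1)], the paper's row i is row i-1 here. *)

Definition is_part (k : nat) (l : seq nat) : bool := (size l == k) && sorted geq l.

(* containment of Young diagrams (missing parts are 0) *)
Definition subpart (a b : seq nat) : bool :=
  all (fun j => nth 0 a j <= nth 0 b j) (iota 0 (size a)).

(* cell (r,c) (0-based row r, 0-based column c) of the skew shape mu/lam *)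
Definition in_skew (lam mu : seq nat) (r c : nat) : bool :=
  (r < size mu) && (nth 0 lam r <= c < nth 0 mu r).

(* T is an element of Tab(mu/lam): entries in {1..k}, strictly increasing
   along rows and columns, entries in (paper's) row i are <= i-1, i.e. entries
   in 0-based row r are <= r. *)
Definition is_tab (k : nat) (lam mu : seq nat) (T : nat -> nat -> nat) : Prop :=
  [/\ (forall r c, in_skew lam mu r c -> 1 <= T r c <= k /\ T r c <= r),
      (forall r c c', in_skew lam mu r c -> in_skew lam mu r c' -> c < c' ->
                      T r c < T r c') &
      (forall r r' c, in_skew lam mu r c -> in_skew lam mu r' c -> r < r' ->
                      T r c < T r' c)].

Definition tab_nonempty (k : nat) (lam mu : seq nat) : Prop :=
  exists T, is_tab k lam mu T.

Definition maximal (k : nat) (lam mu : seq nat) : Prop :=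
  [/\ is_part k mu, subpart lam mu, tab_nonempty k lam mu &
      forall nu, is_part k nu -> subpart lam nu -> sumn mu < sumn nu ->
                 ~ tab_nonempty k lam nu].

Definition part_vals (l : seq nat) : seq nat := sort geq (undup l).

(* P(lambda) = (P_1,...,P_r): the h-th entry (0-based) is the block P_{h+1},
   the (0-based) indices j with lambda_j equal to the (h+1)-th largest value *)
Definition Pblocks (l : seq nat) : seq (seq nat) :=
  [seq [seq j <- iota 0 (size l) | nth 0 l j == v] | v <- part_vals l].

Definition lam_h (l : seq nat) (h : nat) : seq nat :=
  if h == 0 then [::]
  else if h < size (part_vals l) then
    let i := head 0 (nth [::] (Pblocks l) h) in   (* min P_{h+1}, 0-based *)
    [seq x - nth 0 l i | x <- take i l]
  else l.

Definition staircase (n : nat) : seq nat := [seq n - j | j <- iota 0 n].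

(* sylv nu = max { m | delta^m subset nu }; any such m is <= nu_1 *)
Definition sylv (nu : seq nat) : nat :=
  \max_(0 <= m < (nth 0 nu 0).+1 | subpart (staircase m) nu) m.

From mathcomp Require Import all_boot.
From mathcomp Require Import zify.
Set Implicit Arguments. Unset Strict Implicit.

(* Rows are 0-based, so a tableau row r has strictly increasing entries in
   {1..r}, whence mu_r <= lam_r + r; as mu is a partition, mu_r is at most
   maxrow lam r = min_{j <= r} (lam_j + j).  This bound is attained by the
   filling T r c = r + 1 + c - maxrow lam r, so a maximal mu is exactly
   (maxrow lam r)_r.  For i in P_{h+1} with a = min P_{h+1}, lam^(h) is
   (lam_j - lam_a)_{j < a}, and delta^m fits in it iff
   lam_i + m <= maxrow lam i; hence sylv (lam^(h)) = maxrow lam i - lam_i. *)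

Lemma geq_trans : transitive geq.
Proof. by move=> x y z le_yx le_zy; apply: leq_trans le_zy le_yx. Qed.

Lemma sorted_geq_nth (s : seq nat) j j' : sorted geq s -> j <= j' -> j' < size s ->
  nth 0 s j' <= nth 0 s j.
Proof.
move=> s_sorted le_jj' lt_j's.
by apply: (sorted_leq_nth geq_trans leqnn) => //; rewrite inE /=; lia.
Qed.

Lemma sorted_head_le (T : eqType) (leT : rel T) x0 s x :
  transitive leT -> reflexive leT -> sorted leT s -> x \in s -> leT (head x0 s) x.
Proof.
case: s => [|y s] //= leT_tr leT_refl s_sorted; rewrite inE => /predU1P [-> // | x_s].
exact: (allP (order_path_min leT_tr s_sorted)).
Qed.

Lemma leq_sumn (s t : seq nat) : size s = size t ->
  (forall j, nth 0 s j <= nth 0 t j) -> sumn s <= sumn t.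
Proof.
elim: s t => [|x s IHs] [|y t] //= [size_st] le_st.
by rewrite leq_add ?(le_st 0) // IHs // => j; apply: (le_st j.+1).
Qed.

Lemma sumn_pointwise_eq (s t : seq nat) : size s = size t ->
  (forall j, nth 0 s j <= nth 0 t j) -> sumn t <= sumn s -> s = t.
Proof.
elim: s t => [|x s IHs] [|y t] //= [size_st] le_st le_sum.
have le_xy : x <= y := le_st 0.
have le_tail : forall j, nth 0 s j <= nth 0 t j.
  by move=> j; apply: (le_st j.+1).
have le_sumst := leq_sumn size_st le_tail.
have -> : s = t by apply: IHs => //; lia.
by have -> : x = y by lia.
Qed.

Lemma subpart_staircaseP m nu :
  reflect (forall j, j < m -> m - j <= nth 0 nu j) (subpart (staircase m) nu).
Proof.
rewrite /subpart /staircase size_map size_iota.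
have nth_stair j : j < m -> nth 0 [seq m - j | j <- iota 0 m] j = m - j.
  by move=> lt_jm; rewrite (nth_map 0) ?size_iota // nth_iota.
apply: (iffP allP) => fits j; rewrite ?mem_iota /= => lt_jm; move: (fits j);
  by rewrite nth_stair // ?mem_iota; apply.
Qed.

Lemma sylv_eq nu s : (forall m, subpart (staircase m) nu = (m <= s)) -> sylv nu = s.
Proof.
move=> fitsE; apply/eqP; rewrite eqn_leq; apply/andP; split.
  by apply/bigmax_leqP_seq => m _; rewrite fitsE.
apply: (leq_bigmax_seq (F := id)); last by rewrite fitsE.
rewrite mem_index_iota /= ltnS; case: (posnP s) => [-> // | s_gt0].
by have := fitsE s; rewrite leqnn => /subpart_staircaseP/(_ 0 s_gt0); rewrite subn0.
Qed.

Fixpoint maxrow (lam : seq nat) (r : nat) : nat :=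
  if r is r'.+1 then minn (maxrow lam r') (nth 0 lam r + r) else nth 0 lam 0.

Definition max_shape (k : nat) (lam : seq nat) : seq nat := mkseq (maxrow lam) k.

Lemma maxrow_le lam r j : j <= r -> maxrow lam r <= nth 0 lam j + j.
Proof.
elim: r => [|r IHr]; first by rewrite leqn0 => /eqP ->; rewrite addn0.
by rewrite leq_eqVlt ltnS => /orP [/eqP -> | /IHr]; rewrite /= ?geq_minr //; lia.
Qed.

Lemma leq_maxrow lam r m :
  (forall j, j <= r -> m <= nth 0 lam j + j) -> m <= maxrow lam r.
Proof.
elim: r => [|r IHr] bound /=; first by have := bound 0 (leqnn 0); rewrite addn0.
by rewrite leq_min IHr ?bound // => j le_jr; apply: bound; lia.
Qed.

Lemma maxrow_monotone lam r r' : r <= r' -> maxrow lam r' <= maxrow lam r.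
Proof.
by move=> le_rr'; apply: leq_maxrow => j le_jr; apply: maxrow_le; lia.
Qed.

Section MaximalShape.

Variables (k : nat) (lam : seq nat).
Hypothesis lam_part : is_part k lam.

Let size_lam : size lam = k. Proof. by case/andP: lam_part => /eqP. Qed.

Let lam_sorted : sorted geq lam. Proof. by case/andP: lam_part. Qed.

Lemma nth_part_antimono j r : j <= r -> r < k -> nth 0 lam r <= nth 0 lam j.
Proof. by move=> le_jr lt_rk; apply: sorted_geq_nth; rewrite ?size_lam. Qed.

Lemma lam_le_maxrow r : r < k -> nth 0 lam r <= maxrow lam r.
Proof.
by move=> lt_rk; apply: leq_maxrow => j le_jr; have := nth_part_antimono le_jr lt_rk; lia.
Qed.

Lemma nth_max_shape r : r < k -> nth 0 (max_shape k lam) r = maxrow lam r.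
Proof. exact: nth_mkseq. Qed.

Lemma max_shape_part : is_part k (max_shape k lam).
Proof.
rewrite /is_part size_mkseq eqxx; apply/(sortedP 0) => r; rewrite size_mkseq => lt_r1k.
by rewrite /= !nth_max_shape 1?maxrow_monotone //; lia.
Qed.

Lemma subpart_max_shape : subpart lam (max_shape k lam).
Proof.
apply/allP => r; rewrite mem_iota size_lam /= => lt_rk.
by rewrite nth_max_shape // lam_le_maxrow.
Qed.

Lemma max_shape_tab :
  is_tab k lam (max_shape k lam) (fun r c => r + 1 + c - maxrow lam r).
Proof.
have in_skewE r c : in_skew lam (max_shape k lam) r c ->
    [/\ r < k, nth 0 lam r <= c & c < maxrow lam r].
  rewrite /in_skew size_mkseq => /andP [lt_rk]; rewrite nth_max_shape //.
  by split => //; lia.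
split.
- move=> r c /in_skewE [lt_rk ge_c lt_c]; have := maxrow_le lam (leqnn r); lia.
- move=> r c c' /in_skewE [_ ge_c _] _ lt_cc'; have := maxrow_le lam (leqnn r); lia.
- move=> r r' c /in_skewE [_ ge_c lt_c] /in_skewE [_ _ lt_c'] lt_rr'.
  have := maxrow_le lam (leqnn r); have := maxrow_monotone lam (ltnW lt_rr'); lia.
Qed.

Definition prefix_excess (lam : seq nat) (a : nat) : seq nat :=
  [seq x - nth 0 lam a | x <- take a lam].

Lemma subpart_staircase_prefix_excess a i m : a <= i -> i < k ->
  nth 0 lam a = nth 0 lam i ->
  subpart (staircase m) (prefix_excess lam a) = (nth 0 lam i + m <= maxrow lam i).
Proof.
move=> le_ai lt_ik lam_ai.
have size_prefix : size (take a lam) = a by rewrite size_takel ?size_lam //; lia.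
have size_excess : size (prefix_excess lam a) = a by rewrite size_map.
have nth_excess j : j < a -> nth 0 (prefix_excess lam a) j = nth 0 lam j - nth 0 lam i.
  by move=> lt_ja; rewrite (nth_map 0) ?nth_take ?lam_ai ?size_prefix.
apply/subpart_staircaseP/idP => [fits | le_m].
- have le_ma : m <= a.
    rewrite leqNgt; apply/negP => lt_am.
    by have := fits a lt_am; rewrite nth_default ?size_excess //; lia.
  apply: leq_maxrow => j le_ji; have := nth_part_antimono le_ji lt_ik.
  case: (ltnP j m) => [lt_jm | ]; last lia.
  by have := fits j lt_jm; rewrite nth_excess //; lia.
- move=> j lt_jm; have le_ma := leq_trans le_m (maxrow_le lam le_ai).
  have le_ji : j <= i by lia.
  by have := maxrow_le lam le_ji; rewrite nth_excess; lia.
Qed.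

Lemma sylv_prefix_excess a i : a <= i -> i < k -> nth 0 lam a = nth 0 lam i ->
  sylv (prefix_excess lam a) = maxrow lam i - nth 0 lam i.
Proof.
move=> le_ai lt_ik lam_ai; apply: sylv_eq => m.
by rewrite (subpart_staircase_prefix_excess m le_ai lt_ik lam_ai) leq_subRL ?lam_le_maxrow.
Qed.

End MaximalShape.

Lemma tab_row_entry_ge k lam mu T r c : is_tab k lam mu T ->
  in_skew lam mu r (nth 0 lam r + c) -> c < T r (nth 0 lam r + c).
Proof.
case=> entry_bound row_incr _; elim: c => [|c IHc] in_rc.
  by have := entry_bound _ _ in_rc; lia.
have in_rc' : in_skew lam mu r (nth 0 lam r + c) by move: in_rc; rewrite /in_skew; lia.
have := row_incr _ _ _ in_rc' in_rc; rewrite addnS ltnSn => /(_ isT).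
by have := IHc in_rc'; lia.
Qed.

Lemma tab_row_bound k lam mu T r : is_tab k lam mu T -> r < size mu ->
  nth 0 mu r <= nth 0 lam r + r.
Proof.
move=> T_tab lt_r; rewrite leqNgt; apply/negP => long_row.
have in_rr : in_skew lam mu r (nth 0 lam r + r) by rewrite /in_skew lt_r; lia.
have [entry_bound _ _] := T_tab; have := entry_bound _ _ in_rr.
by have := tab_row_entry_ge T_tab in_rr; lia.
Qed.

Lemma tab_le_maxrow k lam mu T r : is_part k mu -> is_tab k lam mu T -> r < k ->
  nth 0 mu r <= maxrow lam r.
Proof.
move=> mu_part T_tab lt_rk; have size_mu : size mu = k by case/andP: mu_part => /eqP.
apply: leq_maxrow => j le_jr.
have lt_j : j < size mu by rewrite size_mu; lia.
by have := nth_part_antimono mu_part le_jr lt_rk; have := tab_row_bound T_tab lt_j; lia.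
Qed.

Lemma maximal_max_shape k lam mu : is_part k lam -> maximal k lam mu ->
  mu = max_shape k lam.
Proof.
move=> lam_part [mu_part _ [T T_tab] mu_max].
have size_mu : size mu = k by case/andP: mu_part => /eqP.
apply: sumn_pointwise_eq; first by rewrite size_mkseq.
  move=> r; case: (ltnP r k) => lt_rk; last by rewrite nth_default ?size_mu.
  by rewrite nth_max_shape // (tab_le_maxrow mu_part T_tab).
rewrite leqNgt; apply/negP => lt_sum.
apply: (mu_max _ (max_shape_part lam_part) (subpart_max_shape lam_part) lt_sum).
by exists (fun r c => r + 1 + c - maxrow lam r); apply: max_shape_tab.
Qed.

Lemma mem_Pblocks lam (h i : nat) :
  h < size (Pblocks lam) -> i \in nth [::] (Pblocks lam) h ->
  i < size lam /\ nth 0 lam i = nth 0 (part_vals lam) h.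
Proof.
rewrite /Pblocks size_map => lt_h; rewrite (nth_map 0) // mem_filter mem_iota add0n.
by case/andP => /eqP.
Qed.

Lemma sorted_Pblock lam h :
  h < size (Pblocks lam) -> sorted leq (nth [::] (Pblocks lam) h).
Proof.
rewrite /Pblocks size_map => lt_h; rewrite (nth_map 0) //.
by apply: sorted_filter; [apply: leq_trans | apply: iota_sorted].
Qed.

Lemma lam_h_prefix_excess k lam (h i : nat) : is_part k lam ->
  h < size (Pblocks lam) -> i \in nth [::] (Pblocks lam) h ->
  exists2 a, a <= i /\ nth 0 lam a = nth 0 lam i & lam_h lam h = prefix_excess lam a.
Proof.
move=> lam_part lt_h i_Ph; have [lt_i lam_i] := mem_Pblocks lt_h i_Ph.
have size_lam : size lam = k by case/andP: lam_part => /eqP.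
rewrite /lam_h; case: (posnP h) => [h0 | h_gt0]; last first.
  have size_vals : size (part_vals lam) = size (Pblocks lam) by rewrite size_map.
  rewrite size_vals lt_h.
  set Ph := nth [::] (Pblocks lam) h in i_Ph *; exists (head 0 Ph) => //.
  have a_Ph : head 0 Ph \in Ph by case: (Ph) i_Ph => // x s _; apply: mem_head.
  have [_ ->] := mem_Pblocks lt_h a_Ph; split; last by [].
  exact: sorted_head_le leq_trans leqnn (sorted_Pblock lt_h) i_Ph.
exists 0; last by rewrite /prefix_excess take0.
split=> //; move: lam_i; rewrite h0 nth0.
have geq_total : total geq by move=> x y; apply: leq_total.
have lam0_vals : nth 0 lam 0 \in part_vals lam.
  by rewrite mem_sort mem_undup mem_nth // (leq_ltn_trans _ lt_i).
have := sorted_head_le 0 geq_trans leqnn (sort_sorted geq_total _) lam0_vals.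
have lt_ik : i < k by rewrite -size_lam.
have := nth_part_antimono lam_part (leq0n i) lt_ik; rewrite /part_vals /=; lia.
Qed.

Theorem proposition3p10 (k : nat) (lam mu : seq nat) (i h : nat) :
  is_part k lam -> maximal k lam mu ->
  h < size (Pblocks lam) -> i \in nth [::] (Pblocks lam) h ->
  nth 0 mu i = nth 0 lam i + sylv (lam_h lam h).
Proof.
move=> lam_part mu_max lt_h i_Ph.
have [lt_i _] := mem_Pblocks lt_h i_Ph.
have lt_ik : i < k by case/andP: lam_part lt_i => /eqP ->.
have [a [le_ai lam_ai] ->] := lam_h_prefix_excess lam_part lt_h i_Ph.
rewrite (maximal_max_shape lam_part mu_max) nth_max_shape //.
rewrite (sylv_prefix_excess lam_part le_ai lt_ik lam_ai) subnKC //.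
exact: (lam_le_maxrow lam_part lt_ik).
Qed.
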